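(* Let code 1 be a stabiliser code with disjointness $\delta_1$ and let code 2 be a stabiliser code encoding one logical qubit with disjointness $\delta_2$. Let the concatenated code be obtained by encoding each physical qubit of code 1 into a block of code 2, and let $\Delta$ be its disjointness. Then $\Delta\ge\delta_1\delta_2$.
   Context: Disjointness of a stabiliser code: for an integer $c\ge1$, a collection of representatives of a logical operator is $c$-disjoint if no physical qubit lies in the support of more than $c$ of them; the unnormalised $c$-disjointness $\Delta'_c$ is the largest integer such that every logical Pauli operator admits at least $\Delta'_c$ representatives forming a $c$-disjoint collection; the (normalised) $c$-disjointness is $\Delta_c=\Delta'_c/c$, and the disjointness is $\Delta=\max_{c\in\mathbb{Z}_+}\Delta_c$. *)

From mathcomp Require Import all_boot all_order all_algebra.
From mathcomp Require Import classical_sets reals.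

Set Implicit Arguments.
Unset Strict Implicit.
Unset Printing Implicit Defensive.

Import GRing.Theory Num.Theory.

(* Pauli operators on the qubit set Q, modulo phases (symplectic form):
   at each qubit a pair (x,z) of bits; (0,0)=I, (1,0)=X, (0,1)=Z, (1,1)=Y. *)
Definition pauli (Q : finType) := {ffun Q -> bool * bool}.

Definition pid (Q : finType) : pauli Q := [ffun _ => (false, false)].

Definition pmul (Q : finType) (P R : pauli Q) : pauli Q :=
  [ffun i => ((P i).1 (+) (R i).1, (P i).2 (+) (R i).2)].

Definition support (Q : finType) (P : pauli Q) : {set Q} :=
  [set i | P i != (false, false)].

(* P and R commute iff they anticommute on an even number of qubits *)
Definition commuteb (Q : finType) (P R : pauli Q) : bool :=
  ~~ odd #|[set i | ((P i).1 && (R i).2) (+) ((P i).2 && (R i).1)]|.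

(* S is (the phase-free image of) a stabiliser group *)
Definition is_stabiliser (Q : finType) (S : {set pauli Q}) : Prop :=
  [/\ pid Q \in S,
      (forall P R, P \in S -> R \in S -> pmul P R \in S) &
      (forall P R, P \in S -> R \in S -> commuteb P R)].

Definition normaliser (Q : finType) (S : {set pauli Q}) : {set pauli Q} :=
  [set P | [forall s in S, commuteb P s]].

Definition nontrivial_logical (Q : finType) (S : {set pauli Q}) (L : pauli Q) :=
  (L \in normaliser S) && (L \notin S).

Definition reps (Q : finType) (S : {set pauli Q}) (L : pauli Q) : {set pauli Q} :=
  [set P in normaliser S | pmul L P \in S].

Definition c_disjoint (Q : finType) (c : nat) (F : {set pauli Q}) : bool :=
  [forall i : Q, #|[set P in F | i \in support P]| <= c].

Definition has_disj (Q : finType) (S : {set pauli Q}) (c m : nat) : bool :=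
  [forall L : pauli Q, nontrivial_logical S L ==>
     [exists F : {set pauli Q},
        [&& F \subset reps S L, c_disjoint c F & m <= #|F| ]]].

(* unnormalised c-disjointness: the largest such m (any such m is at most
   #|pauli Q| as soon as a nontrivial logical operator exists) *)
Definition disj' (Q : finType) (S : {set pauli Q}) (c : nat) : nat :=
  \max_(m < (#|pauli Q|).+1 | has_disj S c m) m.

Definition disjointness (R : realType) (Q : finType) (S : {set pauli Q}) : R :=
  sup [set x : R | exists c : nat, (0 < c)%N /\ x = ((disj' S c)%:R / c%:R)%R].

Definition one_logical_qubit (Q : finType) (S : {set pauli Q}) (Xb Zb : pauli Q) :=
  [/\ Xb \in normaliser S, Zb \in normaliser S, ~~ commuteb Xb Zb &
      forall P, P \in normaliser S ->
        exists a b : bool,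
          pmul P (pmul (if a then Xb else pid Q) (if b then Zb else pid Q)) \in S].

Definition enc1 (Q : finType) (Xb Zb : pauli Q) (p : bool * bool) : pauli Q :=
  pmul (if p.1 then Xb else pid Q) (if p.2 then Zb else pid Q).

Definition encode (Q1 Q2 : finType) (Xb Zb : pauli Q2) (P : pauli Q1)
  : pauli (Q1 * Q2)%type :=
  [ffun q => enc1 Xb Zb (P q.1) q.2].

Definition block_stab (Q1 Q2 : finType) (S2 : {set pauli Q2})
  : {set pauli (Q1 * Q2)%type} :=
  [set P : pauli (Q1 * Q2)%type | [forall b : Q1, ([ffun j => P (b, j)] : pauli Q2) \in S2]].

Definition concat_stab (Q1 Q2 : finType) (S1 : {set pauli Q1})
  (S2 : {set pauli Q2}) (Xb Zb : pauli Q2) : {set pauli (Q1 * Q2)%type} :=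
  [set pmul s (encode Xb Zb t) | s in block_stab Q1 S2, t in S1].

(* A nontrivial logical operator L of the concatenated code is, block by block,
   a code-2 stabiliser times the encoding of a logical operator l of code 1, and
   l is again nontrivial.  Take m1 representatives r of l, no qubit in more than
   c1 of them, and for each nontrivial single-qubit Pauli p take m2 representatives
   of its encoding, no qubit in more than c2 of them.  Replacing, in r, every block
   b by the j-th representative of the encoding of r_b (the same j in all blocks)
   gives m1 m2 distinct representatives of L, and a qubit (b, q) lies in one of
   them only if b lies in r and q in the j-th block representative: at most c1 c2
   of them.  Hence Δ'_{c1 c2} >= Δ'_{c1} Δ'_{c2} for the concatenated code, and
   dividing by c1 c2 and taking suprema gives Δ >= δ1 δ2. *)

(* Import order matters: the finset notations must shadow those of classical_sets,
   and Defs.support the support of ssralg. *)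
From mathcomp Require Import classical_sets reals.
From mathcomp Require Import all_boot all_order all_algebra.
From Pilot Require Import Defs.

Set Implicit Arguments.
Unset Strict Implicit.
Unset Printing Implicit Defensive.

Lemma odd_card_setE (T : finType) (f : pred T) :
  odd #|[set i | f i]| = \big[addb/false]_i f i.
Proof.
rewrite -sum1_card big_mkcond /=.
by elim/big_rec2: _ => // i n b _ <-; rewrite inE; case: (f i).
Qed.

Section PauliGroup.
Variable Q : finType.
Implicit Types (P R T : pauli Q) (S : {set pauli Q}).

Lemma pmulC P R : pmul P R = pmul R P.
Proof. by apply/ffunP=> i; rewrite !ffunE addbC [(P i).2 (+) _]addbC. Qed.

Lemma pmulA P R T : pmul P (pmul R T) = pmul (pmul P R) T.
Proof. by apply/ffunP=> i; rewrite !ffunE /= !addbA. Qed.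

Lemma pmul1p P : pmul (pid Q) P = P.
Proof. by apply/ffunP=> i; rewrite !ffunE; case: (P i). Qed.

Lemma pmulp1 P : pmul P (pid Q) = P.
Proof. by rewrite pmulC pmul1p. Qed.

Lemma pmulpp P : pmul P P = pid Q.
Proof. by apply/ffunP=> i; rewrite !ffunE !addbb. Qed.

Lemma pmulKp P R : pmul P (pmul P R) = R.
Proof. by rewrite pmulA pmulpp pmul1p. Qed.

Lemma pmulACA P R T (U : pauli Q) :
  pmul (pmul P R) (pmul T U) = pmul (pmul P T) (pmul R U).
Proof. by rewrite -!pmulA (pmulA R) (pmulC R) -pmulA. Qed.

Definition symp1 (p q : bool * bool) : bool := (p.1 && q.2) (+) (p.2 && q.1).

Definition symp P R : bool := \big[addb/false]_i symp1 (P i) (R i).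

Lemma commutebE P R : commuteb P R = ~~ symp P R.
Proof. by rewrite /commuteb odd_card_setE. Qed.

Lemma sympC P R : symp P R = symp R P.
Proof.
by apply: eq_bigr => i _; rewrite /symp1; case: (P i) => [[] []]; case: (R i) => [[] []].
Qed.

Lemma sympDl P R T : symp (pmul P R) T = symp P T (+) symp R T.
Proof.
rewrite /symp -big_split; apply: eq_bigr => i _; rewrite ffunE /symp1 /=.
by case: (P i) => [[] []]; case: (R i) => [[] []]; case: (T i) => [[] []].
Qed.

Lemma sympDr P R T : symp T (pmul P R) = symp T P (+) symp T R.
Proof. by rewrite sympC sympDl !(sympC T). Qed.

Lemma symp_pidl T : symp (pid Q) T = false.
Proof. by rewrite /symp big1 // => i _; rewrite ffunE. Qed.

Lemma symp_pidr T : symp T (pid Q) = false.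
Proof. by rewrite sympC symp_pidl. Qed.

Lemma sympp P : symp P P = false.
Proof. by rewrite /symp big1 // => i _; rewrite /symp1; case: (P i) => [[] []]. Qed.

Lemma normaliserP S P :
  reflect (forall s, s \in S -> symp P s = false) (P \in normaliser S).
Proof.
rewrite inE; apply: (iffP forall_inP) => N s /N; first by rewrite commutebE => /negbTE.
by rewrite commutebE => ->.
Qed.

Lemma pid_normaliser S : pid Q \in normaliser S.
Proof. by apply/normaliserP => s _; rewrite symp_pidl. Qed.

Lemma normaliser_pmul S P R :
  P \in normaliser S -> R \in normaliser S -> pmul P R \in normaliser S.
Proof.
move=> /normaliserP NP /normaliserP NR.
by apply/normaliserP => s Ss; rewrite sympDl NP ?NR.
Qed.

Lemma stabiliser_sub_normaliser S : is_stabiliser S -> {subset S <= normaliser S}.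
Proof.
case=> _ _ comm s Ss; apply/normaliserP => t St.
by apply/negbTE; rewrite -commutebE comm.
Qed.

Lemma pid_notin_reps S L : nontrivial_logical S L -> pid Q \notin reps S L.
Proof. by case/andP=> _ LnS; rewrite inE pmulp1 (negbTE LnS) andbF. Qed.

Lemma has_disj_enum S c m L : has_disj S c m -> nontrivial_logical S L ->
  exists g : 'I_m -> pauli Q, [/\ injective g, forall j, g j \in reps S L
    & forall i, #|[set j | i \in support (g j)]| <= c].
Proof.
move=> /forallP/(_ L)/implyP dS /dS /existsP [F /and3P [/subsetP Freps Fdisj mF]].
pose g j := enum_val (widen_ord mF j : 'I_#|F|).
have g_inj : injective g.
  by move=> j k /enum_val_inj/(congr1 val) /= /val_inj.
exists g; split=> // [j | i]; first exact/Freps/enum_valP.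
rewrite -(card_imset _ g_inj); apply: leq_trans (forallP Fdisj i).
apply/subset_leq_card/subsetP => _ /imsetP [j + ->].
by rewrite !inE enum_valP => ->.
Qed.

End PauliGroup.

Section Disjointness.
Variables (Q : finType) (S : {set pauli Q}).

Lemma has_disj0 c : has_disj S c 0.
Proof.
apply/forallP => L; apply/implyP => _; apply/existsP; exists set0.
rewrite sub0set leq0n andbT; apply/forallP => i; apply: (@leq_trans 0) => //.
by rewrite leqn0 cards_eq0; apply/eqP/setP => P; rewrite !inE.
Qed.

Lemma has_disj_disj' c : has_disj S c (disj' S c).
Proof.
rewrite /disj' (bigmax_eq_arg ord0) ?has_disj0 //.
by case: arg_maxnP; rewrite ?has_disj0.
Qed.

Lemma disj'_le_card c : disj' S c <= #|pauli Q|.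
Proof. by apply/bigmax_leqP => m _; rewrite -ltnS. Qed.

(* Without a nontrivial logical operator, has_disj S c m holds for every m. *)
Lemma leq_disj' c m :
  (exists L, nontrivial_logical S L) -> has_disj S c m -> m <= disj' S c.
Proof.
move=> [L Lnt] dm; have /existsP [F /and3P [_ _ mF]] := implyP (forallP dm L) Lnt.
have m_lt : m < #|pauli Q|.+1 by rewrite ltnS (leq_trans mF) ?max_card.
exact: (leq_bigmax_cond (Ordinal m_lt)).
Qed.

End Disjointness.

Section Blocks.
Variables Q1 Q2 : finType.
Implicit Types P R : pauli (Q1 * Q2)%type.

Definition block P (b : Q1) : pauli Q2 := [ffun j => P (b, j)].

Definition inject_block (b : Q1) (s : pauli Q2) : pauli (Q1 * Q2)%type :=
  [ffun q => if q.1 == b then s q.2 else (false, false)].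

Lemma symp_block P R : symp P R = \big[addb/false]_b symp (block P b) (block R b).
Proof.
rewrite /symp pair_big /=; apply: eq_bigr => -[b j] _.
by rewrite !ffunE.
Qed.

Lemma blockM P R b : block (pmul P R) b = pmul (block P b) (block R b).
Proof. by apply/ffunP=> j; rewrite !ffunE. Qed.

Lemma block_pid b : block (pid (Q1 * Q2)%type) b = pid Q2.
Proof. by apply/ffunP=> j; rewrite !ffunE. Qed.

Lemma block_inject b s b' : block (inject_block b s) b' = if b' == b then s else pid Q2.
Proof. by apply/ffunP=> j; rewrite !ffunE /=; case: ifP; rewrite ?ffunE. Qed.

End Blocks.

Section Encoding.
Variables (Q1 Q2 : finType) (Xb Zb : pauli Q2).
Local Notation enc1 := (enc1 Xb Zb).
Local Notation encode := (@encode Q1 Q2 Xb Zb).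

Lemma enc1M p q : enc1 (p.1 (+) q.1, p.2 (+) q.2) = pmul (enc1 p) (enc1 q).
Proof.
apply/ffunP=> i; rewrite /Defs.enc1 !ffunE.
by case: p => [[] []]; case: q => [[] []]; rewrite /= !ffunE /=;
  case: (Xb i) => [[] []]; case: (Zb i) => [[] []].
Qed.

Lemma enc1_pid : enc1 (false, false) = pid Q2.
Proof. exact: pmul1p. Qed.

Lemma block_encode t b : block (encode t) b = enc1 (t b).
Proof. by apply/ffunP=> j; rewrite !ffunE. Qed.

Lemma encodeM a t : encode (pmul a t) = pmul (encode a) (encode t).
Proof. by apply/ffunP=> q; rewrite [LHS]ffunE [pmul a t _]ffunE enc1M !ffunE. Qed.

Lemma encode_pid : encode (pid Q1) = pid (Q1 * Q2)%type.
Proof. by apply/ffunP=> q; rewrite [LHS]ffunE [pid Q1 _]ffunE enc1_pid !ffunE. Qed.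

Hypothesis XZ_anticommute : symp Xb Zb.

Lemma symp_enc1 p q : symp (enc1 p) (enc1 q) = symp1 p q.
Proof.
have ZX_anticommute : symp Zb Xb by rewrite sympC.
rewrite /Defs.enc1 !sympDl !sympDr.
by case: p => [[] []]; case: q => [[] []];
  rewrite /symp1 /= ?symp_pidl ?symp_pidr ?sympp ?XZ_anticommute ?ZX_anticommute.
Qed.

Lemma symp_encode a t : symp (encode a) (encode t) = symp a t.
Proof. by rewrite symp_block; apply: eq_bigr => b _; rewrite !block_encode symp_enc1. Qed.

End Encoding.

Section Concatenation.
Variables (Q1 Q2 : finType) (S1 : {set pauli Q1}) (S2 : {set pauli Q2}).
Variables Xb Zb : pauli Q2.
Hypotheses (stab1 : is_stabiliser S1) (stab2 : is_stabiliser S2).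
Hypothesis logical2 : one_logical_qubit S2 Xb Zb.

Local Notation Q := (Q1 * Q2)%type.
Local Notation C := (concat_stab S1 S2 Xb Zb).
Local Notation B := (block_stab Q1 S2).
Local Notation enc1 := (enc1 Xb Zb).
Local Notation encode := (@encode Q1 Q2 Xb Zb).

Lemma symp_XbZb : symp Xb Zb.
Proof. by case: logical2 => _ _; rewrite commutebE negbK. Qed.

Lemma enc1_normaliser p : enc1 p \in normaliser S2.
Proof.
case: logical2 => NX NZ _ _; rewrite /Defs.enc1.
by apply: normaliser_pmul; case: ifP; rewrite ?pid_normaliser.
Qed.

Lemma normaliser_enc1 P : P \in normaliser S2 -> exists p, pmul P (enc1 p) \in S2.
Proof. by case: logical2 => _ _ _ /[apply] -[a [b PS]]; exists (a, b). Qed.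

Lemma enc1_stab p : enc1 p \in S2 -> p = (false, false).
Proof.
move=> pS2; have symp1_p q : symp1 p q = false.
  by rewrite -(symp_enc1 symp_XbZb) sympC; move/normaliserP: (enc1_normaliser q); apply.
move: (symp1_p (false, true)) (symp1_p (true, false)).
by case: p {pS2 symp1_p} => [[] []].
Qed.

Lemma enc1_reps_eq p p' P :
  pmul (enc1 p) P \in S2 -> pmul (enc1 p') P \in S2 -> p = p'.
Proof.
case: stab2 => _ mulS2 _ /mulS2 /[apply].
rewrite pmulACA pmulpp pmulp1 -enc1M => /enc1_stab.
by case: p => [[] []]; case: p' => [[] []].
Qed.

Lemma enc1_nontrivial p : p != (false, false) -> nontrivial_logical S2 (enc1 p).
Proof.
move=> p0; rewrite /nontrivial_logical enc1_normaliser.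
by apply: contra p0 => /enc1_stab ->.
Qed.

Lemma block_stabE s : (s \in B) = [forall b, block s b \in S2].
Proof. by rewrite inE. Qed.

Lemma block_stab_pmul s s' : s \in B -> s' \in B -> pmul s s' \in B.
Proof.
case: stab2 => _ mulS2 _; rewrite !block_stabE => /forallP sB /forallP s'B.
by apply/forallP => b; rewrite blockM mulS2.
Qed.

Lemma symp_block_stab_encode s a : s \in B -> symp s (encode a) = false.
Proof.
rewrite block_stabE => /forallP sB; rewrite symp_block big1 // => b _.
by rewrite block_encode sympC; apply/normaliserP/sB; apply: enc1_normaliser.
Qed.

Lemma symp_block_stab s s' : s \in B -> s' \in B -> symp s s' = false.
Proof.
rewrite !block_stabE => /forallP sB /forallP s'B.
rewrite symp_block big1 // => b _.
exact/normaliserP/s'B/(stabiliser_sub_normaliser stab2).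
Qed.

Lemma concat_stab_sub_normaliser : {subset C <= normaliser C}.
Proof.
case: stab1 => _ _ comm1.
move=> _ /imset2P [s t sB tS1 ->]; apply/normaliserP => _ /imset2P [s' t' s'B t'S1 ->].
rewrite !sympDl !sympDr symp_block_stab // symp_block_stab_encode //.
rewrite (sympC (encode t)) symp_block_stab_encode // symp_encode ?symp_XbZb //.
by apply/negbTE; rewrite -commutebE comm1.
Qed.

Lemma encode_concat_stab t : t \in S1 -> encode t \in C.
Proof.
move=> tS1; rewrite -[encode t]pmul1p; apply: imset2_f tS1.
by rewrite block_stabE; apply/forallP => b; rewrite block_pid; case: stab2.
Qed.

Lemma inject_block_concat_stab b s : s \in S2 -> inject_block b s \in C.
Proof.
move=> sS2; rewrite -[inject_block b s]pmulp1 -(encode_pid Q1 Xb Zb).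
apply: imset2_f; last by case: stab1.
rewrite block_stabE; apply/forallP => b'; rewrite block_inject.
by case: ifP => // _; case: stab2.
Qed.

Lemma block_normaliser L b : L \in normaliser C -> block L b \in normaliser S2.
Proof.
move=> /normaliserP LN; apply/normaliserP => s sS2.
have := LN _ (inject_block_concat_stab b sS2).
rewrite symp_block (bigD1 b) //= block_inject eqxx big1 ?addbF // => b' /negbTE b'b.
by rewrite block_inject b'b symp_pidr.
Qed.

Lemma normaliser_concat_decomp L :
  L \in normaliser C -> exists l, pmul L (encode l) \in B.
Proof.
move=> LN; have /fin_all_exists [l lS2] :=
  fun b => normaliser_enc1 (block_normaliser b LN).
exists (finfun l); rewrite block_stabE; apply/forallP => b.
by rewrite blockM block_encode ffunE.
Qed.

Lemma concat_logical_decomp L : nontrivial_logical C L ->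
  exists2 l, nontrivial_logical S1 l & pmul L (encode l) \in B.
Proof.
case/andP=> LN LnC; have [l s0B] := normaliser_concat_decomp LN.
have eL : L = pmul (pmul L (encode l)) (encode l) by rewrite -pmulA pmulpp pmulp1.
exists l => //; apply/andP; split.
  apply/normaliserP => t tS1; have /normaliserP/(_ _ (encode_concat_stab tS1)) := LN.
  by rewrite {1}eL sympDl symp_block_stab_encode // symp_encode // symp_XbZb.
by apply: contra LnC => lS1; rewrite eL; apply: imset2_f.
Qed.

Lemma encode_nontrivial l : nontrivial_logical S1 l -> nontrivial_logical C (encode l).
Proof.
case/andP => /normaliserP lN lnS1; apply/andP; split.
  apply/normaliserP => _ /imset2P [s t sB tS1 ->].
  by rewrite sympDr sympC symp_block_stab_encode // symp_encode ?symp_XbZb // lN.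
apply: contra lnS1 => /imset2P [s t sB tS1 el].
have es : s = encode (pmul l t) by rewrite encodeM el -pmulA pmulpp pmulp1.
suff lt1 : pmul l t = pid Q1 by rewrite -[l]pmulp1 -(pmulpp t) pmulA lt1 pmul1p.
apply/ffunP => b; rewrite [RHS]ffunE; apply: enc1_stab.
by move: sB; rewrite es block_stabE => /forallP /(_ b); rewrite block_encode.
Qed.

Section Lift.
Variables (c2 m2 : nat) (g : bool * bool -> 'I_m2 -> pauli Q2).
Hypothesis g_reps : forall p j, pmul (enc1 p) (g p j) \in S2.
(* Choosing the identity for the trivial Pauli keeps the support of lift (r, j)
   over the support of r; this is where the factor c1 comes from. *)
Hypothesis g_pid : forall j, g (false, false) j = pid Q2.
Hypothesis g_inj : forall p, p != (false, false) -> injective (g p).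
Hypothesis g_disj : forall p q, #|[set j | q \in support (g p j)]| <= c2.

Definition lift (x : pauli Q1 * 'I_m2) : pauli Q := [ffun q => g (x.1 q.1) x.2 q.2].

Lemma block_lift x b : block (lift x) b = g (x.1 b) x.2.
Proof. by apply/ffunP => j; rewrite !ffunE. Qed.

Lemma lift_reps L l r j : L \in normaliser C -> pmul L (encode l) \in B ->
  r \in reps S1 l -> lift (r, j) \in reps C L.
Proof.
move=> LN s0B; rewrite inE => /andP [_ lrS1].
have rB : pmul (encode r) (lift (r, j)) \in B.
  by rewrite block_stabE; apply/forallP => b; rewrite blockM block_encode block_lift.
have LliftC : pmul L (lift (r, j)) \in C.
  have -> : pmul L (lift (r, j)) =
      pmul (pmul (pmul L (encode l)) (pmul (encode r) (lift (r, j)))) (encode (pmul l r)).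
    rewrite encodeM pmulACA -(pmulA L) pmulpp pmulp1.
    by rewrite (pmulC (pmul _ _) (encode r)) pmulKp.
  by apply: imset2_f => //; apply: block_stab_pmul.
rewrite inE LliftC andbT -(pmulKp L (lift (r, j))).
exact/normaliser_pmul/concat_stab_sub_normaliser.
Qed.

Lemma lift_inj x y : x.1 != pid Q1 -> lift x = lift y -> x = y.
Proof.
case: x y => [r j] [r' j'] /= r1 exy.
have eblock b : g (r b) j = g (r' b) j' by rewrite -(block_lift (r, j)) exy block_lift.
have err' : r = r'.
  by apply/ffunP => b; apply: (enc1_reps_eq (g_reps (r b) j)); rewrite eblock.
have [b rb] : exists b, r b != (false, false).
  apply/existsP; apply: contraR r1 => /existsPn rI.
  by apply/eqP/ffunP => b; rewrite ffunE; apply/eqP/negPn/rI.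
by rewrite -err' in eblock *; rewrite (g_inj rb (eblock b)).
Qed.

Lemma lift_c_disjoint c1 F1 :
  c_disjoint c1 F1 -> c_disjoint (c1 * c2) (lift @: setX F1 [set: 'I_m2]).
Proof.
move=> /forallP F1disj; apply/forallP => -[b q].
pose J r := [set j | q \in support (g (r b) j)].
pose A := [set x | (x.1 \in F1) && (x.2 \in J x.1)].
have liftA :
    [set P in lift @: setX F1 [set: 'I_m2] | (b, q) \in support P] \subset lift @: A.
  apply/subsetP => P; rewrite inE => /andP [/imsetP [[r j] /setXP [rF1 _] ->] bq].
  by apply: imset_f; rewrite !inE /= rF1; rewrite !inE ffunE in bq.
apply: leq_trans (subset_leq_card liftA) _; apply: leq_trans (leq_imset_card _ _) _.
have -> : #|A| = \sum_(r in F1) #|J r|.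
  rewrite -sum1dep_card -(pair_big_dep (mem F1) (fun r => mem (J r)) (fun _ _ => 1)).
  by apply: eq_bigr => r _; rewrite sum1_card.
have J0 r : b \notin support r -> #|J r| = 0.
  rewrite inE negbK => /eqP rb; apply/eqP; rewrite cards_eq0; apply/eqP/setP => j.
  by rewrite !inE rb g_pid ffunE eqxx.
rewrite (bigID (fun r => b \in support r)) /= [X in _ + X]big1 ?addn0;
  last by move=> r /andP [_ /J0].
apply: (@leq_trans (\sum_(r in F1 | b \in support r) c2)).
  by apply: leq_sum => r _; apply: g_disj.
by rewrite sum_nat_cond_const leq_mul // F1disj.
Qed.

End Lift.

Lemma enc1_reps_family c2 m2 p : has_disj S2 c2 m2 ->
  exists h : 'I_m2 -> pauli Q2,
    [/\ forall j, pmul (enc1 p) (h j) \in S2,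
        p = (false, false) -> forall j, h j = pid Q2,
        p != (false, false) -> injective h
      & forall q, #|[set j | q \in support (h j)]| <= c2].
Proof.
move=> d2; have [-> | p0] := eqVneq p (false, false).
  exists (fun=> pid Q2); split=> // [j | q].
    by rewrite enc1_pid pmulpp; case: stab2.
  rewrite (@leq_trans 0) // leqn0 cards_eq0; apply/eqP/setP => j.
  by rewrite !inE ffunE eqxx.
have [h [h_inj h_reps h_disj]] := has_disj_enum d2 (enc1_nontrivial p0).
exists h; split=> // [j | /eqP]; last by rewrite (negbTE p0).
by move: (h_reps j); rewrite inE => /andP [].
Qed.

Lemma has_disj_concat c1 c2 m1 m2 : has_disj S1 c1 m1 -> has_disj S2 c2 m2 ->
  has_disj C (c1 * c2) (m1 * m2).
Proof.
move=> d1 d2; apply/forallP => L; apply/implyP => /[dup] Lnt /andP [LN _].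
have [l lnt s0B] := concat_logical_decomp Lnt.
have /existsP [F1 /and3P [F1reps F1disj m1F1]] := implyP (forallP d1 l) lnt.
have /fin_all_exists [g /all_and4 [g_reps g_pid g_inj g_disj]] :=
  fun p => enc1_reps_family p d2.
apply/existsP; exists (lift g @: setX F1 [set: 'I_m2]); apply/and3P; split.
- apply/subsetP => _ /imsetP [[r j] /setXP [rF1 _] ->].
  exact: (lift_reps g_reps j LN s0B (subsetP F1reps r rF1)).
- exact: (lift_c_disjoint (g_pid _ erefl) g_disj F1disj).
- rewrite card_in_imset ?cardsX ?cardsT ?card_ord ?leq_mul //.
  move=> -[r j] y /setXP [rF1 _] _.
  apply: (lift_inj g_reps g_inj); apply: contraNneq (pid_notin_reps lnt) => /= <-.
  exact: (subsetP F1reps r rF1).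
Qed.

Lemma leq_disj'_concat c1 c2 : (exists l, nontrivial_logical S1 l) ->
  disj' S1 c1 * disj' S2 c2 <= disj' C (c1 * c2).
Proof.
case=> l lnt; apply: leq_disj'; first by exists (encode l); apply: encode_nontrivial.
exact: has_disj_concat (has_disj_disj' _ _) (has_disj_disj' _ _).
Qed.

End Concatenation.

Import Order.TTheory GRing.Theory Num.Theory.
Local Open Scope ring_scope.

Section Supremum.
Variable R : realType.

Lemma ge_sup_mul (A B : set R) x : has_sup A -> has_sup B ->
  (forall a, A a -> 0 <= a) -> (forall b, B b -> 0 <= b) ->
  (forall a b, A a -> B b -> a * b <= x) -> sup A * sup B <= x.
Proof.
move=> supA supB A_ge0 B_ge0 le_x.
have [[a0 Aa0] [b0 Bb0]] := (supA.1, supB.1).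
have x_ge0 : 0 <= x.
  exact: le_trans (mulr_ge0 (A_ge0 _ Aa0) (B_ge0 _ Bb0)) (le_x _ _ Aa0 Bb0).
have le_aB a : A a -> a * sup B <= x.
  move=> Aa; have := A_ge0 _ Aa; rewrite le0r => /orP [/eqP -> | a_gt0].
    by rewrite mul0r.
  rewrite -ler_pdivlMl //; apply: ge_sup supB.1 _ => b Bb.
  by rewrite ler_pdivlMl //; apply: le_x.
have := le_trans (B_ge0 _ Bb0) (sup_upper_bound supB Bb0).
rewrite le0r => /orP [/eqP -> | supB_gt0]; first by rewrite mulr0.
rewrite -ler_pdivlMr //; apply: ge_sup supA.1 _ => a Aa.
by rewrite ler_pdivlMr //; apply: le_aB.
Qed.

Definition disj_ratios (Q : finType) (S : {set pauli Q}) : set R :=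
  [set x | exists c : nat, (0 < c)%N /\ x = (disj' S c)%:R / c%:R]%classic.

Lemma disjointnessE (Q : finType) (S : {set pauli Q}) :
  disjointness R S = sup (disj_ratios S).
Proof. by []. Qed.

Lemma has_sup_disj_ratios (Q : finType) (S : {set pauli Q}) : has_sup (disj_ratios S).
Proof.
split; first by exists ((disj' S 1)%:R / 1%:R), 1%N.
exists #|pauli Q|%:R => _ [c [c_gt0 ->]].
rewrite ler_pdivrMr ?ltr0n // -natrM ler_nat.
exact: leq_trans (disj'_le_card S c) (leq_pmulr _ c_gt0).
Qed.

Lemma disj_ratios_ge0 (Q : finType) (S : {set pauli Q}) x : disj_ratios S x -> 0 <= x.
Proof. by move=> [c [_ ->]]; rewrite divr_ge0. Qed.

End Supremum.

Theorem lemma5 (R : realType) (Q1 Q2 : finType)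
  (S1 : {set pauli Q1}) (S2 : {set pauli Q2}) (Xb Zb : pauli Q2) :
  is_stabiliser S1 ->
  (exists L : pauli Q1, nontrivial_logical S1 L) ->
  is_stabiliser S2 ->
  one_logical_qubit S2 Xb Zb ->
  disjointness R S1 * disjointness R S2
    <= disjointness R (concat_stab S1 S2 Xb Zb).
Proof.
move=> stab1 logical1 stab2 logical2; rewrite !disjointnessE.
apply: ge_sup_mul; do ?[exact: has_sup_disj_ratios | exact: disj_ratios_ge0].
move=> _ _ [c1 [c1_gt0 ->]] [c2 [c2_gt0 ->]].
set C := concat_stab S1 S2 Xb Zb.
have ratio_C : disj_ratios C ((disj' C (c1 * c2))%:R / (c1 * c2)%:R : R).
  by exists (c1 * c2)%N; rewrite muln_gt0 c1_gt0 c2_gt0.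
apply: le_trans (sup_upper_bound (has_sup_disj_ratios R C) ratio_C).
rewrite mulrACA -invfM -!natrM ler_wpM2r ?invr_ge0 ?ler0n // ler_nat.
exact: leq_disj'_concat stab1 stab2 logical2 c1 c2 logical1.
Qed.
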